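(* Let $\mathbb{F}$ be a field and $n\ge1$. Every maximal (with respect to inclusion) nilpotent subsemigroup $T$ of $M(n,\mathbb{F})$ is a subalgebra of $M(n,\mathbb{F})$, i.e. $T$ is closed under addition and multiplication by scalars (in addition to matrix multiplication).
   Context: $M(n,\mathbb{F})$ denotes the semigroup of all $n\times n$ matrices over $\mathbb{F}$ under matrix multiplication. A semigroup $S$ with zero $0$ is nilpotent of nilpotency degree $k$ if $a_1a_2\cdots a_k=0$ for all $a_1,\dots,a_k\in S$ and there exist $b_1,\dots,b_{k-1}\in S$ with $b_1\cdots b_{k-1}\neq 0$; a nilpotent subsemigroup of $M(n,\mathbb{F})$ is one that is nilpotent with the zero matrix as its zero. Maximality here is among all nilpotent subsemigroups of $M(n,\mathbb{F})$ (of any nilpotency degree). *)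

From HB Require Import structures.
From mathcomp Require Import all_boot all_order all_algebra.
Set Implicit Arguments. Unset Strict Implicit. Unset Printing Implicit Defensive.
Import GRing.Theory.
Local Open Scope ring_scope.

Definition subsemigroup (F : fieldType) (n : nat) (T : 'M[F]_n -> Prop) : Prop :=
  forall A B, T A -> T B -> T (A *m B).

Definition mxprod (F : fieldType) (n : nat) (s : seq 'M[F]_n) : 'M[F]_n :=
  foldr (fun A B => A *m B) 1%:M s.

(* T is a nilpotent subsemigroup of M(n,F) with the zero matrix as its zero:
   T is a subsemigroup, contains the zero matrix, and for some k >= 1 every
   product of k elements of T is the zero matrix. *)
Definition nilpotent_subsemigroup (F : fieldType) (n : nat)
    (T : 'M[F]_n -> Prop) : Prop :=
  [/\ subsemigroup T, T 0 &
      exists k : nat, forall s : seq 'M[F]_n,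
        size s = k.+1 -> (forall A, A \in s -> T A) -> mxprod s = 0].

Definition maximal_nilpotent_subsemigroup (F : fieldType) (n : nat)
    (T : 'M[F]_n -> Prop) : Prop :=
  nilpotent_subsemigroup T /\
  forall S : 'M[F]_n -> Prop, nilpotent_subsemigroup S ->
    (forall A, T A -> S A) -> forall A, S A -> T A.

From HB Require Import structures.
From mathcomp Require Import all_boot all_order all_algebra.
Set Implicit Arguments.
Unset Strict Implicit.
Unset Printing Implicit Defensive.
Import GRing.Theory.
Local Open Scope ring_scope.

(* The linear span of a nilpotent subsemigroup T is again a nilpotent
   subsemigroup: by multilinearity of the matrix product, a product of k
   elements of the span is a linear combination of products of k elements
   of T.  A maximal T therefore contains its span, i.e. it is a subspace. *)

Section LinearSpan.

Variables (F : fieldType) (n : nat).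
Implicit Types (T : 'M[F]_n -> Prop) (s t : seq 'M[F]_n).

Inductive lin_span T : 'M[F]_n -> Prop :=
| lin_span_base A : T A -> lin_span T A
| lin_span_add A B : lin_span T A -> lin_span T B -> lin_span T (A + B)
| lin_span_scale (a : F) A : lin_span T A -> lin_span T (a *: A).

Lemma mxprod_cat s t : mxprod (s ++ t) = mxprod s *m mxprod t.
Proof. by elim: s => [|A s IHs] /=; rewrite ?mul1mx // -mulmxA -IHs. Qed.

Lemma mxprod_rcons s A : mxprod (rcons s A) = mxprod s *m A.
Proof. by rewrite -cats1 mxprod_cat /= mulmx1. Qed.

Lemma lin_span_mul T :
  subsemigroup T -> subsemigroup (lin_span T).
Proof.
move=> mulT A B spanA; elim: spanA B => [A' TA'|A1 A2 _ IH1 _ IH2|a A' _ IH] B.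
- elim=> [B' TB'|B1 B2 _ IH1 _ IH2|b B' _ IH].
  + exact/lin_span_base/mulT.
  + by rewrite mulmxDr; apply: lin_span_add.
  + by rewrite -scalemxAr; apply: lin_span_scale.
- by move=> spanB; rewrite mulmxDl; apply: lin_span_add; [apply: IH1|apply: IH2].
- by move=> spanB; rewrite -scalemxAl; apply/lin_span_scale/IH.
Qed.

Lemma lin_span_sandwich_eq0 T (P Q : 'M[F]_n) :
  (forall A, T A -> P *m A *m Q = 0) ->
  forall A, lin_span T A -> P *m A *m Q = 0.
Proof.
move=> vanishT A; elim=> [A' /vanishT //|A1 A2 _ IH1 _ IH2|a A' _ IH].
- by rewrite mulmxDr mulmxDl IH1 IH2 addr0.
- by rewrite -scalemxAr -scalemxAl IH scaler0.
Qed.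

(* Induction on the number of factors taken from the span rather than from T. *)
Lemma mxprod_lin_span_eq0 {T} {k : nat} :
  (forall s, size s = k -> (forall A, A \in s -> T A) -> mxprod s = 0) ->
  forall s t, (size s + size t)%N = k ->
    (forall A, A \in s -> lin_span T A) -> (forall A, A \in t -> T A) ->
    mxprod (s ++ t) = 0.
Proof.
move=> nilT s; elim/last_ind: s => [|s x IHs] t size_st spanS Tt.
  exact: nilT.
have spanS' A : A \in s -> lin_span T A.
  by move=> sA; apply: spanS; rewrite mem_rcons in_cons sA orbT.
have IHx A : T A -> mxprod s *m A *m mxprod t = 0.
  move=> TA; rewrite -mxprod_rcons -mxprod_cat cat_rcons.
  apply: IHs => // [|B]; first by rewrite size_rcons in size_st; rewrite /= addnS.
  by rewrite in_cons => /predU1P [->|/Tt].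
rewrite mxprod_cat mxprod_rcons.
by apply: lin_span_sandwich_eq0 IHx _ _; apply: spanS; rewrite mem_rcons mem_head.
Qed.

Lemma lin_span_nilpotent T :
  nilpotent_subsemigroup T -> nilpotent_subsemigroup (lin_span T).
Proof.
case=> mulT T0 [k nilT]; split; first exact: lin_span_mul.
  exact: lin_span_base.
exists k => s size_s spanS; rewrite -[s]cats0.
by apply: (mxprod_lin_span_eq0 nilT) => //; rewrite addn0.
Qed.

End LinearSpan.

Theorem lemma3 (F : fieldType) (n : nat) (hn : (0 < n)%N)
    (T : 'M[F]_n -> Prop) :
  maximal_nilpotent_subsemigroup T ->
  (forall A B, T A -> T B -> T (A + B)) /\
  (forall (a : F) A, T A -> T (a *: A)).
Proof.
move=> [nilT maxT].
have span_sub A : lin_span T A -> T A.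
  exact: maxT (lin_span_nilpotent nilT) (@lin_span_base F n T) A.
split=> [A B TA TB | a A TA]; apply: span_sub.
- exact: lin_span_add (lin_span_base TA) (lin_span_base TB).
- exact: lin_span_scale (lin_span_base TA).
Qed.
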